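(* Let $p\ge 3$ be an odd integer. Then the minimum number of copies of $B_p$ in a graph of order $p+2$ and size $\mathrm{ex}(p+2,B_p)+1$ is $3$, and the minimum number of copies of $B_p$ in a graph of order $p+3$ and size $\mathrm{ex}(p+3,B_p)+1$ is $3(p+1)$.
   Context: All graphs are finite and simple. The order of a graph is its number of vertices and its size is its number of edges. A copy of $H$ in $G$ is a subgraph of $G$ isomorphic to $H$; the number of copies of $H$ in $G$ is the number of distinct subgraphs of $G$ isomorphic to $H$. For a graph $H$ and a positive integer $n$, the Turán number $\mathrm{ex}(n,H)$ is the maximum size of a simple graph of order $n$ containing no copy of $H$. The book $B_p$ with $p$ pages is the graph consisting of $p$ triangles sharing a common edge (so $B_p$ has $p+2$ vertices and $2p+1$ edges). *)

From mathcomp Require Import all_boot.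
Set Implicit Arguments. Unset Strict Implicit. Unset Printing Implicit Defensive.

Definition graph (n : nat) := {set {set 'I_n}}.

Definition is_graph (n : nat) (G : graph n) : bool :=
  [forall e in G, #|e| == 2].

Definition is_copy (m n : nat) (H : graph m) (G : graph n)
    (S : {set 'I_n} * graph n) : bool :=
  [&& S.2 \subset G,
      [forall e in S.2, e \subset S.1] &
      [exists f : {ffun 'I_m -> 'I_n},
         [&& injectiveb f, f @: setT == S.1 &
             [forall i, forall j,
                ([set f i; f j] \in S.2) == ([set i; j] \in H)]]]].

Definition copies (m n : nat) (H : graph m) (G : graph n) : nat :=
  #|[set S | is_copy H G S]|.

Definition ex (m : nat) (n : nat) (H : graph m) : nat :=
  \max_(G : graph n | is_graph G && (copies H G == 0)) #|G|.

(* The book B_p on 'I_(p+2): spine {0,1}, pages {0,i},{1,i} for i >= 2. *)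
Definition book (p : nat) : graph p.+2 :=
  [set e : {set 'I_p.+2} |
     (e == [set ord0; inord 1]) ||
     [exists i : 'I_p.+2, (2 <= i) &&
        ((e == [set ord0; i]) || (e == [set inord 1; i]))]].

From mathcomp Require Import all_boot zify.
Set Implicit Arguments. Unset Strict Implicit. Unset Printing Implicit Defensive.

(* For p >= 3 a copy of B_p in G is the same thing as a spine edge s together
   with a set P of p common neighbours of s outside s.  Call a vertex universal
   if it is adjacent to all others, and let p = 2q + 1.
   On p + 2 vertices a copy uses every vertex, so both spine vertices are
   universal and there are 'C(k, 2) copies, k the number of universal vertices.
   At most q non-edges leave k >= 3; the complement of a matching of q + 1
   edges has k = 1, hence no copy, and that of a matching of q edges has k = 3.
   On p + 3 vertices a copy misses one vertex z, which must be the only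
   non-neighbour of each spine vertex.  At most q + 1 non-edges leave k >= 2;
   three universal vertices already give 3(p + 1) copies, and if k = 2 the
   non-edges form a perfect matching of the other p + 1 vertices, and there are
   exactly 3(p + 1) copies: p + 1 with the universal pair as spine and p + 1
   through each universal vertex.  The complement of a perfect matching of all
   p + 3 vertices has no copy at all. *)

Lemma eq_set2 (T : finType) (a b c d : T) : a != b ->
  [set a; b] = [set c; d] -> (a = c /\ b = d) \/ (a = d /\ b = c).
Proof.
move=> nab E.
have /set2P ha : a \in [set c; d] by rewrite -E set21.
have /set2P hb : b \in [set c; d] by rewrite -E set22.
by case: ha hb nab => -> [] ->; rewrite ?eqxx // => _; [left | right].
Qed.

Lemma set2C (T : finType) (a b : T) : [set a; b] = [set b; a].
Proof. exact: setUC. Qed.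

Lemma set_neq_mem (T : finType) (A B : {set T}) x : x \in A -> x \notin B -> A != B.
Proof. by move=> xA; apply: contraNneq => <-. Qed.

Lemma setUDl_disjoint (T : finType) (A B : {set T}) :
  [disjoint A & B] -> (A :|: B) :\: A = B.
Proof. by rewrite setDUl setDv set0U disjoint_sym => /setDidPl. Qed.

Lemma cardsU_disjoint (T : finType) (A B : {set T}) :
  [disjoint A & B] -> #|A :|: B| = #|A| + #|B|.
Proof. by rewrite -(leq_card_setU A B).2 => /eqP. Qed.

Lemma cardsU3_disjoint (T : finType) (A B C : {set T}) :
  [disjoint A & B] -> [disjoint A & C] -> [disjoint B & C] ->
  #|A :|: B :|: C| = #|A| + #|B| + #|C|.
Proof.
move=> dAB dAC dBC.
have dABC : [disjoint A :|: B & C] by rewrite -setI_eq0 setIUl setU_eq0 !setI_eq0 dAC dBC.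
by rewrite !cardsU_disjoint.
Qed.

Lemma disjoint_fst (S S' : finType) (X Y : {set S * S'}) :
  (forall x y, x \in X -> y \in Y -> x.1 != y.1) -> [disjoint X & Y].
Proof.
move=> neq; rewrite disjoints_subset; apply/subsetP => x xX; rewrite inE.
by apply/negP => /(neq x x xX); rewrite eqxx.
Qed.

Lemma imset_disjoint (T U : finType) (f : T -> U) (A B : {set T}) :
  injective f -> [disjoint A & B] -> [disjoint f @: A & f @: B].
Proof.
move=> fi; rewrite -!setI_eq0 -imsetI; first by rewrite imset_eq0.
by move=> x y _ _ /fi.
Qed.

Lemma subset_imset_pair (T U : finType) (f : T -> U) (A : {set T}) (e : {set U}) :
  #|e| == 2 -> e \subset f @: A -> exists i j, e = [set f i; f j].
Proof.
case/cards2P => a [b [_ ->]]; rewrite subUset !sub1set.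
by case/andP => /imsetP [i _ ->] /imsetP [j _ ->]; exists i, j.
Qed.

(** * Copies of books as spine-pages pairs *)

Definition book_spine p : {set 'I_p.+2} := [set ord0; inord 1].

Lemma mem_book_spine p (i : 'I_p.+2) : (i \in book_spine p) = (i <= 1).
Proof. by rewrite in_set2 -!(inj_eq val_inj) /= inordK //; case: i => [[|[|k]] hk]. Qed.

Lemma card_book_spine p : #|book_spine p| = 2.
Proof. by rewrite cards2 -(inj_eq val_inj) /= inordK. Qed.

Lemma card_book_pages p : #|~: book_spine p| = p.
Proof. by have := cardsC (book_spine p); rewrite card_book_spine card_ord => -[]. Qed.

Definition book_edges n (s P : {set 'I_n}) : graph n :=
  s |: [set [set x; w] | x in s, w in P].

Lemma book_edges_spine n (s P : {set 'I_n}) : s \in book_edges s P.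
Proof. exact: setU11. Qed.

Lemma book_edges_page n (s P : {set 'I_n}) x w :
  x \in s -> w \in P -> [set x; w] \in book_edges s P.
Proof. by move=> xs wP; rewrite setU1r //; apply: imset2_f. Qed.

Lemma mem_book_edges n (s P : {set 'I_n}) a b : #|s| = 2 -> [disjoint s & P] ->
  ([set a; b] \in book_edges s P) =
  (a != b) && ((a \in s) && (b \in s :|: P) || (a \in P) && (b \in s)).
Proof.
move=> cs dsP; rewrite in_setU1 inE; apply/idP/idP.
- case/orP => [/eqP E | /imset2P [x w xs wP E]].
    have nab : a != b by apply/eqP => eab; move: cs; rewrite -E eab setUid cards1.
    by rewrite nab -E set21 set22.
  have nxw : x != w by apply: contraTneq wP => <-; rewrite (disjointFr dsP xs).
  by case: (eq_set2 nxw (esym E)) => [[<- <-] | [<- <-]];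
    rewrite ?xs ?wP ?orbT ?andbT // eq_sym nxw.
- case/andP => nab /orP [/andP [sa /orP [sb | Pb]] | /andP [Pa sb]].
  + by rewrite eqEcard cs cards2 nab subUset !sub1set sa sb.
  + by apply/orP; right; apply/imset2P; exists a b.
  + by apply/orP; right; apply/imset2P; exists b a => //; rewrite set2C.
Qed.

Lemma mem_book_edges_imset m n (f : 'I_m -> 'I_n) (s P : {set 'I_m}) i j :
  injective f -> #|s| = 2 -> [disjoint s & P] ->
  ([set f i; f j] \in book_edges (f @: s) (f @: P)) = ([set i; j] \in book_edges s P).
Proof.
move=> fi cs dsP.
have dfsP := imset_disjoint fi dsP.
by rewrite !mem_book_edges ?card_imset ?(inj_eq fi) -?imsetU ?(mem_imset _ _ fi).
Qed.

Lemma bookE p : book p = book_edges (book_spine p) (~: book_spine p).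
Proof.
apply/setP => e; rewrite inE in_setU1; congr (_ || _); apply/existsP/imset2P.
- case=> i /andP [i2 /orP [] /eqP ->]; [exists ord0 i | exists (inord 1) i] => //;
    by rewrite ?in_setC mem_book_spine ?inordK // -ltnNge.
- case=> x w /set2P [] ->; rewrite in_setC mem_book_spine -ltnNge => w2 ->;
    by exists w; rewrite w2 eqxx ?orbT.
Qed.

Lemma book_edges_sub n (s P : {set 'I_n}) e : #|s| = 2 -> [disjoint s & P] ->
  e \in book_edges s P -> (#|e| == 2) && (e \subset s :|: P).
Proof.
move=> cs dsP; rewrite in_setU1 => /orP [/eqP -> | /imset2P [x w xs wP ->]].
  by rewrite cs subsetUl.
have nxw : x != w by apply: contraTneq wP => <-; rewrite (disjointFr dsP xs).
by rewrite cards2 nxw subUset !sub1set !inE xs wP orbT.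
Qed.

Lemma disjoint_book_spine p : [disjoint book_spine p & ~: book_spine p].
Proof. by rewrite -subsets_disjoint. Qed.

Lemma imset_book_vertices p n (f : 'I_p.+2 -> 'I_n) :
  f @: [set: 'I_p.+2] = f @: book_spine p :|: f @: ~: book_spine p.
Proof. by rewrite -imsetU setUCr. Qed.

Lemma mem_book_edges_embedding p n (f : 'I_p.+2 -> 'I_n) i j : injective f ->
  ([set f i; f j] \in book_edges (f @: book_spine p) (f @: ~: book_spine p)) =
  ([set i; j] \in book p).
Proof.
by move=> fi; rewrite bookE mem_book_edges_imset ?card_book_spine ?disjoint_book_spine.
Qed.

Lemma book_embedding n p (s P : {set 'I_n}) :
  #|s| = 2 -> #|P| = p -> [disjoint s & P] ->
  exists2 f : 'I_p.+2 -> 'I_n, injective f &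
    f @: book_spine p = s /\ f @: (~: book_spine p) = P.
Proof.
move=> /eqP /cards2P [u [v [nuv ->]]] cP dsP.
have [uP vP] : u \notin P /\ v \notin P by rewrite !(disjointFr dsP) ?set21 ?set22.
set e := enum P; have se : size e = p by rewrite -cardE.
have eP k : k < p -> nth u e k \in P by move=> kp; rewrite -mem_enum mem_nth ?se.
pose g k := match k with 0 => u | 1 => v | k.+2 => nth u e k end.
exists (fun i : 'I_p.+2 => g i); last split.
- move=> [[|[|i]] hi] [[|[|j]] hj] /= gij; apply: val_inj => //=.
  + by rewrite gij eqxx in nuv.
  + by move: uP; rewrite gij eP.
  + by rewrite gij eqxx in nuv.
  + by move: vP; rewrite gij eP.
  + by move: uP; rewrite -gij eP.
  + by move: vP; rewrite -gij eP.
  + by congr _.+2; apply/eqP; rewrite -(nth_uniq u _ _ (enum_uniq P)) ?se ?gij.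
- by rewrite imsetU1 imset_set1 /= inordK.
- apply/setP => w; apply/imsetP/idP => [[i] | wP].
    by rewrite in_setC mem_book_spine -ltnNge; case: i => [[|[|i]] hi] //= _ ->; apply: eP.
  have wi : index w e < p by rewrite -se index_mem mem_enum.
  exists (inord (index w e).+2); first by rewrite in_setC mem_book_spine inordK.
  by rewrite inordK //= nth_index ?mem_enum.
Qed.

(* [(s, P)] stands for the copy of [B_p] with spine [s] and pages [P]. *)
Definition book_configs n p (G : graph n) : {set {set 'I_n} * {set 'I_n}} :=
  [set sP : {set 'I_n} * {set 'I_n} | [&& #|sP.1| == 2, #|sP.2| == p, [disjoint sP.1 & sP.2] &
             book_edges sP.1 sP.2 \subset G]].

Lemma book_configsP n p (G : graph n) (s P : {set 'I_n}) :
  reflect [/\ #|s| = 2, #|P| = p, [disjoint s & P] & book_edges s P \subset G]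
          ((s, P) \in book_configs p G).
Proof.
by rewrite inE; apply: (iffP and4P) => -[/eqP ? /eqP ? ? ?]; split => //; apply/eqP.
Qed.

Definition book_subgraph n (sP : {set 'I_n} * {set 'I_n}) : {set 'I_n} * graph n :=
  (sP.1 :|: sP.2, book_edges sP.1 sP.2).

Lemma book_subgraph_copy n p (G : graph n) sP :
  sP \in book_configs p G -> is_copy (book p) G (book_subgraph sP).
Proof.
case: sP => s P /book_configsP [cs cP dsP sG].
have [f fi [fs fP]] := book_embedding cs cP dsP.
apply/and3P; split => //=.
  by apply/forallP => e; apply/implyP => /(book_edges_sub cs dsP) /andP [].
apply/existsP; exists (finfun f); apply/and3P; split.
- by apply/injectiveP => i j; rewrite !ffunE => /fi.
- by rewrite (eq_imset _ (ffunE f)) imset_book_vertices fs fP.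
- apply/forallP => i; apply/forallP => j.
  by rewrite !ffunE -fs -fP mem_book_edges_embedding.
Qed.

Lemma copy_book_subgraph n p (G : graph n) S : is_graph G -> is_copy (book p) G S ->
  exists2 sP, sP \in book_configs p G & S = book_subgraph sP.
Proof.
case: S => V F gG /and3P [/= FG /forallP FV /existsP [f /and3P [/injectiveP fi /eqP fV fE]]].
set s := f @: book_spine p; set P := f @: ~: book_spine p.
have cs : #|s| = 2 by rewrite card_imset ?card_book_spine.
have dsP : [disjoint s & P] := imset_disjoint fi (disjoint_book_spine p).
have fVsP : V = s :|: P by rewrite -fV imset_book_vertices.
have EF : F = book_edges s P.
  apply/setP => e; apply/idP/idP => eF.
  - have e2 : #|e| == 2 by apply: (implyP (forallP gG e)); apply: (subsetP FG).
    have [i [j Ee]] : exists i j, e = [set f i; f j].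
      by apply: (subset_imset_pair (A := setT) e2); rewrite fV; exact: implyP (FV e) eF.
    by move: eF; rewrite Ee mem_book_edges_embedding // (eqP (forallP (forallP fE i) j)).
  - have /andP [e2 esP] := book_edges_sub cs dsP eF.
    have [i [j Ee]] : exists i j, e = [set f i; f j].
      by apply: (subset_imset_pair (A := setT) e2); rewrite imset_book_vertices.
    by move: eF; rewrite Ee mem_book_edges_embedding // (eqP (forallP (forallP fE i) j)).
exists (s, P); last by rewrite /book_subgraph fVsP EF.
by apply/book_configsP; split; rewrite -?EF // card_imset ?card_book_pages.
Qed.

(* Some page avoids any other candidate spine, so the edges determine the spine. *)
Lemma book_subgraph_inj n p (G : graph n) : 2 < p ->
  {in book_configs p G &, injective (@book_subgraph n)}.
Proof.
move=> p3 [s P] [s' P'] /book_configsP [cs cP dP _] /book_configsP [cs' cP' dP' _].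
case=> /= EV EF.
suff ss' : s = s' by rewrite -(setUDl_disjoint dP) -(setUDl_disjoint dP') EV ss'.
apply/eqP; rewrite eqEcard cs cs' leqnn andbT; apply/subsetP => w ws.
apply: contraT => ws'.
have : w \in s' :|: P' by rewrite -EV inE ws.
rewrite inE (negbTE ws') /= => wP'.
have /subsetPn [y yP ys'] : ~~ (P \subset s').
  by apply: contraTN p3 => /subset_leq_card; rewrite cP cs' -leqNgt.
have := book_edges_page ws yP.
by rewrite EF mem_book_edges // (negbTE ws') (negbTE ys') !andbF.
Qed.

Lemma copies_book n p (G : graph n) : is_graph G -> 2 < p ->
  copies (book p) G = #|book_configs p G|.
Proof.
move=> gG p3; rewrite /copies -(card_in_imset (book_subgraph_inj (G := G) p3)).
apply: eq_card => S; rewrite inE; apply/idP/imsetP.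
  by move/(copy_book_subgraph gG).
by case=> sP sPG ->; apply: book_subgraph_copy.
Qed.

(** * Non-edges and universal vertices *)

Definition nonedges n (G : graph n) : graph n :=
  [set e : {set 'I_n} | (#|e| == 2) && (e \notin G)].

Definition universal n (G : graph n) : {set 'I_n} := ~: cover (nonedges G).

Section Nonedges.

Variables (n : nat) (G : graph n).

Lemma card_nonedges : is_graph G -> #|G| + #|nonedges G| = 'C(n, 2).
Proof.
move=> gG; rewrite -cardsUI.
have -> : G :&: nonedges G = set0.
  by apply/setP => e; rewrite !inE; case: (e \in G); rewrite ?andbF.
rewrite cards0 addn0 -[X in 'C(X, 2)]card_ord -card_draws; apply: eq_card => e; rewrite !inE.
by case eG: (e \in G); rewrite ?andbT //= (implyP (forallP gG e) eG).
Qed.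

Lemma nonedge_neq v w : [set v; w] \in nonedges G -> v != w.
Proof. by rewrite inE cards2 => /andP [/eqP]; case: (v != w). Qed.

Lemma universal_edge x y : x \in universal G -> y != x -> [set x; y] \in G.
Proof.
rewrite inE => xU nyx; apply: contraNT xU => nxy.
by apply/bigcupP; exists [set x; y]; rewrite ?set21 // inE cards2 (eq_sym x) nyx.
Qed.

Lemma sum_card_nonedges : \sum_(e in nonedges G) #|e| = 2 * #|nonedges G|.
Proof.
rewrite (eq_bigr (fun _ => 2)) => [|e]; first by rewrite sum_nat_const mulnC.
by rewrite inE => /andP [/eqP].
Qed.

Lemma card_universal : n - 2 * #|nonedges G| <= #|universal G|.
Proof.
have := cardsC (cover (nonedges G)); rewrite card_ord -/(universal G).
by have := (leq_card_cover (nonedges G)).1; rewrite sum_card_nonedges; lia.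
Qed.

Lemma trivIset_nonedgesE :
  trivIset (nonedges G) = (#|cover (nonedges G)| == 2 * #|nonedges G|).
Proof. by rewrite /trivIset sum_card_nonedges. Qed.

Definition nonneighbour (v : 'I_n) : 'I_n :=
  odflt v [pick z | [set v; z] \in nonedges G].

Lemma nonneighbourP v :
  v \in cover (nonedges G) -> [set v; nonneighbour v] \in nonedges G.
Proof.
case/bigcupP => e eN ve; rewrite /nonneighbour; case: pickP => [// | none].
move: (eN); rewrite inE => /andP [/cards2P [x [y [_ Ee]]] _].
by move: ve; rewrite Ee => /set2P [] E; subst;
  [have := none y | have := none x; rewrite set2C]; rewrite eN.
Qed.

Lemma nonneighbour_uniq v w : trivIset (nonedges G) ->
  [set v; w] \in nonedges G -> w = nonneighbour v.
Proof.
move=> /trivIsetP tr vwN.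
have vN : v \in cover (nonedges G) by apply/bigcupP; exists [set v; w]; rewrite ?set21.
have vzN := nonneighbourP vN.
have [E | nE] := eqVneq [set v; w] [set v; nonneighbour v].
  by case: (eq_set2 (nonedge_neq vwN) E) => -[// e1 e2]; rewrite -e1 e2.
by have := disjointFr (tr _ _ vwN vzN nE) (set21 v w); rewrite set21.
Qed.

Lemma edge_of_matching v w : trivIset (nonedges G) ->
  v != w -> w != nonneighbour v -> [set v; w] \in G.
Proof.
move=> tr nvw; apply: contraNT => vwG; apply/eqP/nonneighbour_uniq => //.
by rewrite inE cards2 nvw.
Qed.

End Nonedges.

Lemma book_configs_universal n p (G : graph n) (s P : {set 'I_n}) :
  #|s| = 2 -> #|P| = p -> [disjoint s & P] -> s \subset universal G ->
  (s, P) \in book_configs p G.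
Proof.
move=> cs cP dsP /subsetP sU; apply/book_configsP; split => //.
apply/subsetP => e; rewrite in_setU1 => /orP [/eqP -> | /imset2P [x w xs wP ->]].
  have /cards2P [a [b [nab Es]]] : #|s| == 2 by rewrite cs.
  by rewrite Es universal_edge 1?eq_sym // sU // Es set21.
apply: universal_edge; first exact: sU.
by apply: contraTneq wP => ->; rewrite (disjointFr dsP xs).
Qed.

Lemma card_book_support n p (G : graph n) (s P : {set 'I_n}) :
  (s, P) \in book_configs p G -> #|s :|: P| = p.+2.
Proof. by case/book_configsP => cs cP dsP _; rewrite cardsU_disjoint ?cs ?cP. Qed.

Lemma nonneighbour_notin_book n p (G : graph n) (s P : {set 'I_n}) x :
  (s, P) \in book_configs p G -> x \in s -> x \in cover (nonedges G) ->
  nonneighbour G x \notin s :|: P.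
Proof.
case/book_configsP => cs _ dsP /subsetP sG xs /nonneighbourP xzN.
have nxz := nonedge_neq xzN; move: xzN; rewrite inE => /andP [_ xzG].
rewrite inE negb_or; apply/andP; split; apply: contraNN xzG => zsP; apply: sG.
  suff -> : [set x; nonneighbour G x] = s by apply: book_edges_spine.
  by apply/eqP; rewrite eqEcard cs cards2 nxz subUset !sub1set xs zsP.
exact: book_edges_page.
Qed.

(** * Graphs of order p + 2 *)

Lemma card_book_configs_spanning p (G : graph p.+2) :
  #|book_configs p G| = 'C(#|universal G|, 2).
Proof.
rewrite -cards_draws.
have -> : book_configs p G =
    (fun s => (s, ~: s)) @: [set s : {set 'I_p.+2} | s \subset universal G & #|s| == 2].
  apply/setP => -[s P]; apply/idP/imsetP => [sPG | [s' s'U [-> ->]]].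
  - have [cs _ dsP _] := book_configsP _ _ _ _ sPG.
    have sPT : s :|: P = setT.
      by apply/eqP; rewrite eqEcard subsetT cardsT card_ord (card_book_support sPG) leqnn.
    exists s; last by rewrite -(setUDl_disjoint dsP) sPT setTD.
    rewrite inE cs eqxx andbT; apply/subsetP => x xs; rewrite inE.
    by apply: contraT => /negbNE /(nonneighbour_notin_book sPG xs); rewrite sPT inE.
  - rewrite inE in s'U; case/andP: s'U => sU /eqP cs.
    apply: book_configs_universal => //; last by rewrite -subsets_disjoint.
    by have := cardsC s'; rewrite cs card_ord; lia.
by rewrite card_imset // => s1 s2 [].
Qed.

Lemma three_le_book_configs_spanning p (G : graph p.+2) :
  2 * #|nonedges G| < p -> 3 <= #|book_configs p G|.
Proof.
move=> hN; have U3 : 3 <= #|universal G| by have := card_universal G; lia.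
by rewrite card_book_configs_spanning; exact: leq_bin2l 2 U3.
Qed.

(** * Graphs of order p + 3 *)

Lemma book_configs_missing_vertex p (G : graph p.+3) (s P : {set 'I_p.+3}) :
  (s, P) \in book_configs p G ->
  exists z, [/\ z \notin s, P = ~: (z |: s) & forall w, w \notin s :|: P -> w = z].
Proof.
move=> sPG; have [_ _ dsP _] := book_configsP _ _ _ _ sPG.
have /cards1P [z Ez] : #|~: (s :|: P)| == 1.
  by have := cardsC (s :|: P); rewrite card_ord (card_book_support sPG); lia.
have outz w : (w \notin s :|: P) = (w == z) by rewrite -in_setC Ez in_set1.
exists z; split => [| | w]; last by rewrite outz => /eqP.
  by apply: contraTN (eqxx z); rewrite -outz inE => ->.
apply/setP => w; rewrite !inE; case ws: (w \in s); first by rewrite (disjointFr dsP ws) orbT.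
by have := outz w; rewrite inE ws /= => <-; rewrite orbF negbK.
Qed.

Lemma book_spine_universal p (G : graph p.+3) (s P : {set 'I_p.+3}) x y :
  trivIset (nonedges G) -> (s, P) \in book_configs p G -> s = [set x; y] -> x != y ->
  x \in cover (nonedges G) -> y \in universal G.
Proof.
move=> tr sPG Es nxy xN; rewrite inE; apply: contraNN nxy => yN; apply/eqP.
have [z [_ _ outz]] := book_configs_missing_vertex sPG.
have nonneighbour_z u : u \in s -> u \in cover (nonedges G) -> u = nonneighbour G z.
  move=> us uN; apply: nonneighbour_uniq => //.
  by rewrite set2C -(outz _ (nonneighbour_notin_book sPG us uN)) nonneighbourP.
have xs : x \in s by rewrite Es set21.
have ys : y \in s by rewrite Es set22.
by rewrite (nonneighbour_z x xs xN) (nonneighbour_z y ys yN).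
Qed.

Definition spine_configs n (s : {set 'I_n}) : {set {set 'I_n} * {set 'I_n}} :=
  [set (s, ~: (z |: s)) | z in ~: s].

Lemma card_spine_configs n (s : {set 'I_n}) : #|spine_configs s| = n - #|s|.
Proof.
have -> : n - #|s| = #|~: s| by have := cardsC s; rewrite card_ord; lia.
rewrite card_in_imset // => z z' zs _ [].
move/setC_inj/setP/(_ z); rewrite !inE eqxx => /esym /orP [/eqP // | zs'].
by rewrite inE zs' in zs.
Qed.

Lemma spine_configs_fst n (s : {set 'I_n}) sP : sP \in spine_configs s -> sP.1 = s.
Proof. by case/imsetP => z _ ->. Qed.

Lemma card_pages_missing p (s : {set 'I_p.+3}) z :
  #|s| = 2 -> z \notin s -> #|~: (z |: s)| = p.
Proof. by move=> cs zs; have := cardsC (z |: s); rewrite cardsU1 zs cs card_ord; lia. Qed.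

Lemma spine_configs_sub p (G : graph p.+3) (s : {set 'I_p.+3}) :
  #|s| = 2 -> s \subset universal G -> spine_configs s \subset book_configs p G.
Proof.
move=> cs sU; apply/subsetP => _ /imsetP [z zs ->]; rewrite inE in zs.
apply: book_configs_universal => //; first exact: card_pages_missing.
by rewrite disjoints_subset setCK subsetU1.
Qed.

Definition through_configs n (G : graph n) (a : 'I_n) : {set {set 'I_n} * {set 'I_n}} :=
  [set ([set a; v], ~: (nonneighbour G v |: [set a; v])) | v in cover (nonedges G)].

Lemma card_through_configs n (G : graph n) a :
  a \in universal G -> #|through_configs G a| = #|cover (nonedges G)|.
Proof.
rewrite inE => aN; rewrite card_in_imset // => v v' vN _ [/setP /(_ v)].
rewrite set22 => /esym /set2P [av | //]; by rewrite -av vN in aN.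
Qed.

Lemma through_configs_fst n (G : graph n) a sP : sP \in through_configs G a ->
  exists2 v, v \in cover (nonedges G) & sP.1 = [set a; v].
Proof. by case/imsetP => v vN ->; exists v. Qed.

Lemma through_configs_sub p (G : graph p.+3) a : trivIset (nonedges G) ->
  a \in universal G -> through_configs G a \subset book_configs p G.
Proof.
move=> tr aU; apply/subsetP => _ /imsetP [v vN ->].
have vzN := nonneighbourP vN; set z := nonneighbour G v in vzN *.
have zN : z \in cover (nonedges G) by apply/bigcupP; exists [set v; z]; rewrite ?set22.
have nva : v != a by apply: contraTneq vN => ->; rewrite inE in aU.
have nza : z != a by apply: contraTneq zN => ->; rewrite inE in aU.
have cs : #|[set a; v]| = 2 by rewrite cards2 eq_sym nva.
apply/book_configsP; split => //.
- by rewrite card_pages_missing // in_set2 negb_or nza eq_sym (nonedge_neq vzN).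
- by rewrite disjoints_subset setCK subsetU1.
apply/subsetP => e; rewrite in_setU1 => /orP [/eqP -> | /imset2P [x w xav wP ->]].
  exact: universal_edge.
move: wP; rewrite !inE !negb_or => /and3P [nwz nwa nwv].
case/set2P: xav => ->; first exact: universal_edge.
by apply: edge_of_matching; rewrite // eq_sym.
Qed.

Lemma disjoint_spine_configs n (s s' : {set 'I_n}) :
  s != s' -> [disjoint spine_configs s & spine_configs s'].
Proof. by move=> ss'; apply: disjoint_fst => x y /spine_configs_fst -> /spine_configs_fst ->. Qed.

Lemma three_universal_book_configs p (G : graph p.+3) :
  2 < #|universal G| -> 3 * p.+1 <= #|book_configs p G|.
Proof.
case/card_gt2P => a [b [c [[aU bU cU] [nab nbc nca]]]].
have nac : a != c by rewrite eq_sym.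
have spine_sub x y : x \in universal G -> y \in universal G -> x != y ->
    spine_configs [set x; y] \subset book_configs p G.
  by move=> xU yU nxy; rewrite spine_configs_sub ?cards2 ?nxy // subUset !sub1set xU yU.
have card_spine (x y : 'I_p.+3) : x != y -> #|spine_configs [set x; y]| = p.+1.
  by move=> nxy; rewrite card_spine_configs cards2 nxy subn2.
apply: leq_trans (subset_leq_card (_ : spine_configs [set a; b] :|: spine_configs [set a; c]
  :|: spine_configs [set b; c] \subset _)); last by rewrite !subUset !spine_sub.
rewrite cardsU3_disjoint ?card_spine //; first lia.
all: apply: disjoint_spine_configs.
- by apply: (set_neq_mem (x := b)); rewrite ?set22 // in_set2 negb_or eq_sym nab.
- by apply: (set_neq_mem (x := a)); rewrite ?set21 // in_set2 negb_or nab.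
- by apply: (set_neq_mem (x := a)); rewrite ?set21 // in_set2 negb_or nab.
Qed.

Lemma book_configs_two_universal p (G : graph p.+3) a b :
  trivIset (nonedges G) -> universal G = [set a; b] -> a != b ->
  book_configs p G =
    spine_configs [set a; b] :|: through_configs G a :|: through_configs G b.
Proof.
move=> tr Uab nab; apply/eqP; rewrite eqEsubset !subUset.
rewrite spine_configs_sub ?through_configs_sub ?cards2 ?nab ?Uab ?set21 ?set22 //= andbT.
apply/subsetP => -[s P] sPG; rewrite !in_setU.
have [z [zs EP outz]] := book_configs_missing_vertex sPG.
have [cs _ _ _] := book_configsP _ _ _ _ sPG.
have /cards2P [x [y [nxy Es]]] : #|s| == 2 by rewrite cs.
have through u v : s = [set u; v] -> v \in cover (nonedges G) ->
    (s, P) \in through_configs G u.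
  move=> Esuv vN; apply/imsetP; exists v => //.
  suff -> : nonneighbour G v = z by rewrite EP Esuv.
  by apply/outz/(nonneighbour_notin_book sPG) => //; rewrite Esuv set22.
have covered u : u \notin universal G -> u \in cover (nonedges G) by rewrite inE negbK.
have [xU | /covered xN] := boolP (x \in universal G);
  have [yU | /covered yN] := boolP (y \in universal G).
- suff Esab : s = [set a; b] by rewrite EP Esab imset_f ?orTb // inE -Esab.
  apply/eqP; rewrite eqEcard -Uab cs Es subUset !sub1set xU yU.
  by rewrite Uab cards2 nab.
- by move: xU (through _ _ Es yN); rewrite Uab => /set2P [] ->  ->; rewrite ?orbT.
- by move: yU (through y x (etrans Es (set2C x y)) xN); rewrite Uab => /set2P [] -> ->;
    rewrite ?orbT.
- by have := book_spine_universal tr sPG Es nxy xN; rewrite inE yN.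
Qed.

Lemma card_book_configs_two_universal p (G : graph p.+3) :
  #|universal G| = 2 -> trivIset (nonedges G) -> #|book_configs p G| = 3 * p.+1.
Proof.
move=> /eqP /cards2P [a [b [nab Uab]]] tr.
have aU : a \in universal G by rewrite Uab set21.
have bU : b \in universal G by rewrite Uab set22.
have card_cover : #|cover (nonedges G)| = p.+1.
  by have := cardsC (cover (nonedges G)); rewrite -/(universal G) Uab cards2 nab card_ord; lia.
rewrite (book_configs_two_universal tr Uab nab) cardsU3_disjoint.
- by rewrite card_spine_configs !card_through_configs // card_cover cards2 nab subn2; lia.
- apply: disjoint_fst => sP sP' /spine_configs_fst -> /through_configs_fst [v vN ->].
  by apply: (set_neq_mem (x := b)); rewrite ?set22 // in_set2 negb_or eq_sym nab;
    apply: contraTneq vN => <-; rewrite inE in bU.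
- apply: disjoint_fst => sP sP' /spine_configs_fst -> /through_configs_fst [v vN ->].
  by apply: (set_neq_mem (x := a)); rewrite ?set21 // in_set2 negb_or nab;
    apply: contraTneq vN => <-; rewrite inE in aU.
- apply: disjoint_fst => sP sP' /through_configs_fst [v vN ->] /through_configs_fst [v' vN' ->].
  by apply: (set_neq_mem (x := a)); rewrite ?set21 // in_set2 negb_or nab;
    apply: contraTneq vN' => <-; rewrite inE in aU.
Qed.

Lemma book_configs_no_universal p (G : graph p.+3) :
  trivIset (nonedges G) -> universal G = set0 -> book_configs p G = set0.
Proof.
move=> tr U0; apply/setP => -[s P]; rewrite in_set0; apply/negP => sPG.
have [cs _ _ _] := book_configsP _ _ _ _ sPG.
have /cards2P [x [y [nxy Es]]] : #|s| == 2 by rewrite cs.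
have : x \notin universal G by rewrite U0 in_set0.
rewrite inE negbK => /(book_spine_universal tr sPG Es nxy).
by rewrite U0 in_set0.
Qed.

Lemma three_mul_le_book_configs p (G : graph p.+3) :
  2 * #|nonedges G| <= p.+1 -> 3 * p.+1 <= #|book_configs p G|.
Proof.
move=> hN; have := card_universal G.
have := (leq_card_cover (nonedges G)).1; rewrite sum_card_nonedges.
have := cardsC (cover (nonedges G)); rewrite card_ord -/(universal G).
case: (ltnP 2 #|universal G|) => [/three_universal_book_configs // | U2] hC hcov hU.
rewrite card_book_configs_two_universal ?trivIset_nonedgesE //; apply/eqP; lia.
Qed.

(** * Complements of matchings and the extremal graphs *)

Definition matched (c m x y : nat) : bool :=
  [&& c <= x, c <= y, x < c + m.*2, y < c + m.*2 & (x - c)./2 == (y - c)./2].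

(* The complete graph on 'I_n minus the matching {c + 2k, c + 2k + 1}, k < m. *)
Definition comatching n c m : graph n :=
  [set e : {set 'I_n} | [exists x : 'I_n, exists y : 'I_n,
     [&& e == [set x; y], x != y & ~~ matched c m x y]]].

Lemma matchedC c m x y : matched c m x y = matched c m y x.
Proof. by rewrite /matched; apply/and5P/and5P => -[? ? ? ? /eqP ->]. Qed.

Lemma matched_block c m x y z :
  matched c m x z -> matched c m y z -> x != z -> y != z -> x = y.
Proof. by move=> /and5P [? ? ? ? /eqP ?] /and5P [? ? ? ? /eqP ?] /eqP ? /eqP ?; lia. Qed.

Section Comatching.

Variables (n c m : nat).

Lemma mem_comatching (x y : 'I_n) :
  ([set x; y] \in comatching n c m) = (x != y) && ~~ matched c m x y.
Proof.
rewrite inE; apply/existsP/andP => [[x' /existsP [y' /and3P [/eqP E nxy' mxy']]] | [nxy mxy]].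
  have nxy : x != y.
    by apply/eqP => exy; move: (cards2 x' y'); rewrite -E exy setUid cards1 nxy'.
  case: (eq_set2 nxy E) => -[-> ->]; first by split.
  by rewrite eq_sym matchedC; split.
by exists x; apply/existsP; exists y; rewrite eqxx nxy.
Qed.

Lemma comatching_graph : is_graph (comatching n c m).
Proof.
apply/forallP => e; apply/implyP; rewrite inE.
by case/existsP => x /existsP [y /and3P [/eqP -> nxy _]]; rewrite cards2 nxy.
Qed.

Lemma mem_nonedges_comatching (x y : 'I_n) :
  ([set x; y] \in nonedges (comatching n c m)) = (x != y) && matched c m x y.
Proof. by rewrite [_ \in nonedges _]inE mem_comatching cards2 negb_and !negbK; case: (x == y). Qed.

Lemma trivIset_nonedges_comatching : trivIset (nonedges (comatching n c m)).
Proof.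
have pair_at A v : A \in nonedges (comatching n c m) -> v \in A ->
    exists w : 'I_n, [/\ matched c m w v, w != v & A = [set v; w]].
  move=> AN; have /cards2P [x [y [nxy EA]]] : #|A| == 2 by move: AN; rewrite inE => /andP [].
  move: AN; rewrite EA mem_nonedges_comatching nxy /= => mxy /set2P [] ->.
    by exists y; rewrite matchedC mxy eq_sym nxy.
  by exists x; rewrite mxy nxy set2C.
apply/trivIsetP => A B AN BN nAB; apply/pred0P => v /=; apply/negbTE/negP => /andP [vA vB].
have [a [mav nav EA]] := pair_at A v AN vA.
have [b [mbv nbv EB]] := pair_at B v BN vB.
have /val_inj eab := matched_block mav mbv nav nbv.
by move: nAB; rewrite EA EB eab eqxx.
Qed.

End Comatching.

Lemma card_nonedges_comatching n c m :
  c + m.*2 <= n.+1 -> #|nonedges (comatching n.+1 c m)| = m.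
Proof.
move=> hn; pose pair (k : 'I_m) : {set 'I_n.+1} := [set inord (c + k.*2); inord (c + k.*2).+1].
have val_lo (k : 'I_m) : ((inord (c + k.*2) : 'I_n.+1) : nat) = c + k.*2.
  by rewrite inordK //; have := ltn_ord k; lia.
have val_hi (k : 'I_m) : ((inord (c + k.*2).+1 : 'I_n.+1) : nat) = (c + k.*2).+1.
  by rewrite inordK //; have := ltn_ord k; lia.
have -> : nonedges (comatching n.+1 c m) = pair @: setT.
  apply/setP => e; apply/idP/imsetP => [eN | [k _ ->]]; last first.
    rewrite mem_nonedges_comatching -(inj_eq val_inj) /= val_lo val_hi.
    have := ltn_ord k; rewrite neq_ltn ltnSn /= => km.
    by apply/and5P; split; try lia; apply/eqP; lia.
  have /cards2P [x [y [nxy Ee]]] : #|e| == 2 by move: eN; rewrite inE => /andP [].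
  move: eN; rewrite Ee mem_nonedges_comatching nxy => /and5P [cx cy xm ym /eqP hxy].
  have km : (x - c)./2 < m by lia.
  exists (Ordinal km) => //; rewrite /pair /=.
  have [[ex ey] | [ex ey]] : (x : nat) = c + (x - c)./2.*2 /\ (y : nat) = (c + (x - c)./2.*2).+1 \/
                             (x : nat) = (c + (x - c)./2.*2).+1 /\ (y : nat) = c + (x - c)./2.*2.
    by move: nxy; rewrite -(inj_eq val_inj) /= => /eqP; lia.
  - by congr (_ |: [set _]); apply: val_inj; rewrite /= inordK //; lia.
  - by rewrite set2C; congr (_ |: [set _]); apply: val_inj; rewrite /= inordK //; lia.
rewrite card_in_imset ?cardsT ?card_ord // => k k' _ _ /setP /(_ (inord (c + k.*2))).
rewrite /pair set21 in_set2 -!(inj_eq val_inj) /= !val_lo val_hi => /esym /orP [] /eqP h;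
  by apply: val_inj => /=; lia.
Qed.

Lemma card_universal_comatching n c m :
  c + m.*2 <= n.+1 -> #|universal (comatching n.+1 c m)| = n.+1 - m.*2.
Proof.
move=> hn; have := trivIset_nonedges_comatching n.+1 c m.
rewrite trivIset_nonedgesE card_nonedges_comatching // => /eqP hcov.
have := cardsC (cover (nonedges (comatching n.+1 c m))).
by rewrite card_ord hcov -/(universal (comatching n.+1 c m)); lia.
Qed.

Lemma ex_extremal m n (H : graph m) (G0 : graph n) :
  is_graph G0 -> copies H G0 = 0 ->
  (forall G : graph n, is_graph G -> #|G0| < #|G| -> 0 < copies H G) -> ex n H = #|G0|.
Proof.
move=> gG0 cG0 above; apply/eqP; rewrite eqn_leq; apply/andP; split.
  apply/bigmax_leqP => G /andP [gG /eqP cG]; rewrite leqNgt.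
  by apply/negP => /(above G gG); rewrite cG.
by apply: (leq_bigmax_cond G0); rewrite gG0 cG0 eqxx.
Qed.

Lemma ex_book_order2 p q : 2 < p -> p = q.*2.+1 -> ex p.+2 (book p) + q.+1 = 'C(p.+2, 2).
Proof.
move=> p3 pq; set T := comatching p.+2 1 q.+1.
have hT : 1 + q.+1.*2 <= p.+2 by lia.
have cardT := card_nonedges (comatching_graph p.+2 1 q.+1).
rewrite -/T card_nonedges_comatching // in cardT.
have T0 : copies (book p) T = 0.
  rewrite copies_book ?comatching_graph // card_book_configs_spanning.
  by rewrite card_universal_comatching // (_ : _ - _ = 1) //; lia.
rewrite (ex_extremal (comatching_graph _ _ _) T0) // -/T => G gG ltTG.
rewrite copies_book //; apply: leq_trans (three_le_book_configs_spanning _) => //.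
by have := card_nonedges gG; lia.
Qed.

Lemma ex_book_order3 p q : 2 < p -> p = q.*2.+1 -> ex p.+3 (book p) + q.+2 = 'C(p.+3, 2).
Proof.
move=> p3 pq; set T := comatching p.+3 0 q.+2.
have hT : 0 + q.+2.*2 <= p.+3 by lia.
have cardT := card_nonedges (comatching_graph p.+3 0 q.+2).
rewrite -/T card_nonedges_comatching // in cardT.
have T0 : copies (book p) T = 0.
  rewrite copies_book ?comatching_graph // book_configs_no_universal ?cards0 //.
    exact: trivIset_nonedges_comatching.
  by apply/eqP; rewrite -cards_eq0 card_universal_comatching //; lia.
rewrite (ex_extremal (comatching_graph _ _ _) T0) // -/T => G gG ltTG.
rewrite copies_book //; apply: leq_trans (three_mul_le_book_configs _) => //.
by have := card_nonedges gG; lia.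
Qed.

Lemma min_book_copies_order2 p q : 2 < p -> p = q.*2.+1 ->
  (forall G : graph p.+2, is_graph G ->
      #|G| = (ex p.+2 (book p)).+1 -> 3 <= copies (book p) G) /\
  (exists G : graph p.+2, [/\ is_graph G,
      #|G| = (ex p.+2 (book p)).+1 & copies (book p) G = 3]).
Proof.
move=> p3 pq; have exE := ex_book_order2 p3 pq; split.
  move=> G gG cardG; rewrite copies_book //; apply: three_le_book_configs_spanning.
  by have := card_nonedges gG; lia.
have hT : 3 + q.*2 <= p.+2 by lia.
exists (comatching p.+2 3 q); split; first exact: comatching_graph.
  by have := card_nonedges (comatching_graph p.+2 3 q); rewrite card_nonedges_comatching //; lia.
rewrite copies_book ?comatching_graph // card_book_configs_spanning.
by rewrite card_universal_comatching // (_ : _ - _ = 3) //; lia.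
Qed.

Lemma min_book_copies_order3 p q : 2 < p -> p = q.*2.+1 ->
  (forall G : graph p.+3, is_graph G ->
      #|G| = (ex p.+3 (book p)).+1 -> 3 * p.+1 <= copies (book p) G) /\
  (exists G : graph p.+3, [/\ is_graph G,
      #|G| = (ex p.+3 (book p)).+1 & copies (book p) G = 3 * p.+1]).
Proof.
move=> p3 pq; have exE := ex_book_order3 p3 pq; split.
  move=> G gG cardG; rewrite copies_book //; apply: three_mul_le_book_configs.
  by have := card_nonedges gG; lia.
have hT : 2 + q.+1.*2 <= p.+3 by lia.
exists (comatching p.+3 2 q.+1); split; first exact: comatching_graph.
  by have := card_nonedges (comatching_graph p.+3 2 q.+1); rewrite card_nonedges_comatching //; lia.
rewrite copies_book ?comatching_graph //.
apply: card_book_configs_two_universal; last exact: trivIset_nonedges_comatching.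
by rewrite card_universal_comatching //; lia.
Qed.

Theorem theorem4 (p : nat) (hp3 : 3 <= p) (hodd : odd p) :
  ((forall G : graph p.+2, is_graph G ->
      #|G| = (ex p.+2 (book p)).+1 -> 3 <= copies (book p) G) /\
   (exists G : graph p.+2, [/\ is_graph G,
      #|G| = (ex p.+2 (book p)).+1 & copies (book p) G = 3])) /\
  ((forall G : graph p.+3, is_graph G ->
      #|G| = (ex p.+3 (book p)).+1 -> 3 * p.+1 <= copies (book p) G) /\
   (exists G : graph p.+3, [/\ is_graph G,
      #|G| = (ex p.+3 (book p)).+1 & copies (book p) G = 3 * p.+1])).
Proof.
have pq : p = p./2.*2.+1 by rewrite -[LHS]odd_double_half hodd.
by split; [apply: min_book_copies_order2 hp3 pq | apply: min_book_copies_order3 hp3 pq].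
Qed.
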